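(* Let $(\mathcal A,\phi)$ be a noncommutative probability space with an exchangeability system whose copies are indexed by $k\in\{0,1,2,\dots\}$, and let $X_1,\dots,X_n\in\mathcal A$. Then $$\phi(X_1X_2\cdots X_n)=\sum_{\substack{A\subseteq[n]\\ 1\in A}}\frac{1}{|A|}\,\tilde\phi(X_1^{A,\omega}X_2^{A,\omega}\cdots X_n^{A,\omega}),$$ where for each $A$, $\omega$ is a primitive root of unity of order $|A|$ and $X_j^{A,\omega}=\sum_{k=1}^{|A|}\omega^kX_j^{(k)}$ if $j\in A$, and $X_j^{A,\omega}=X_j^{(0)}$ if $j\notin A$.
   Context: A noncommutative probability space is a pair $(\mathcal A,\phi)$ of a complex unital algebra $\mathcal A$ and a unital linear functional $\phi$. An exchangeability system for $(\mathcal A,\phi)$ here consists of a noncommutative probability space $(\mathcal U,\tilde\phi)$ and a family $(\iota_k)_{k\ge0}$ of embeddings (injective unital algebra homomorphisms) $\iota_k:\mathcal A\to\mathcal U$ with $\tilde\phi\circ\iota_k=\phi$; write $X^{(k)}=\iota_k(X)$. It is required that for all $X_1,\dots,X_n\in\mathcal A$, all indices $i_1,\dots,i_n\ge0$ and every bijection $\sigma$ of $\{0,1,2,\dots\}$, $\tilde\phi(X_1^{(i_1)}\cdots X_n^{(i_n)})=\tilde\phi(X_1^{(\sigma(i_1))}\cdots X_n^{(\sigma(i_n))})$. *)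

From mathcomp Require Import all_boot all_algebra.
From mathcomp Require Import reals.
From mathcomp Require Import complex.
Import GRing.Theory.
Set Implicit Arguments. Unset Strict Implicit. Unset Printing Implicit Defensive.
Local Open Scope ring_scope.

Definition unital_functional (R : realType) (A : algType R[i]) (phi : A -> R[i]^o) :=
  linear phi /\ phi 1 = 1.

Definition exchangeability_system (R : realType) (A U : algType R[i])
    (phi : A -> R[i]^o) (phit : U -> R[i]^o) (iota : nat -> {lrmorphism A -> U}) :=
  [/\ unital_functional phit,
      (forall k, injective (iota k)),
      (forall k (x : A), phit (iota k x) = phi x) &
      (forall (m : nat) (X : 'I_m -> A) (idx : 'I_m -> nat) (s : nat -> nat),
          bijective s ->
          phit (\prod_(j < m) iota (idx j) (X j))
          = phit (\prod_(j < m) iota (s (idx j)) (X j)))].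

Definition omega_copy (R : realType) (A U : algType R[i])
    (iota : nat -> {lrmorphism A -> U}) (n : nat) (S : {set 'I_n})
    (omega : R[i]) (x : A) (j : 'I_n) : U :=
  if j \in S then \sum_(1 <= k < #|S|.+1) omega ^+ k *: iota k x
  else iota 0%N x.

(* With N factors, expanding each X_j^{A,ω} multilinearly (copies 0, …, N suffice, as
   |A| ≤ N) turns the right-hand side into Σ_k w(k) φ̃(X_1^(k_1) ⋯ X_N^(k_N)) over index
   maps k, and by exchangeability this moment is invariant under composing k with a
   permutation c of the copies.  So it suffices that Σ_c w(c ∘ k) is N! for constant k
   and 0 otherwise.  Grouping the c by u = c⁻¹(0), only A = {j | k_j ≠ u} contributes,
   leaving a sum over injective relabellings c of the values r ≠ u of k of
   Π_r ψ(c r)^(mult r), where ψ(l) = ω_A^l.  Since the power sums Σ_l ω_A^(pl) vanish for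
   0 < p < |A|, a recursion on the number b+1 of these values evaluates it to
   (-1)^b b! (N-1-b)! |A|.  Summing over u, the contributions of the u inside and outside
   the image of k cancel unless k is constant. *)

From HB Require Import structures.
From mathcomp Require Import all_boot all_algebra fingroup perm.
From mathcomp Require Import reals complex.
From mathcomp Require Import ring zify.
Import GRing.Theory Num.Theory.
Set Implicit Arguments. Unset Strict Implicit. Unset Printing Implicit Defensive.
Local Open Scope ring_scope.

Lemma linear_sumZ (K : fieldType) (U : lmodType K) (f : U -> K^o) (I : Type)
    (r : seq I) (a : I -> K) (x : I -> U) :
  linear f -> f (\sum_(i <- r) a i *: x i) = \sum_(i <- r) a i * f (x i).
Proof.
move=> f_lin.
pose fL : {linear U -> K^o} := HB.pack f (GRing.isLinear.Build _ _ _ _ f f_lin).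
by rewrite [LHS](linear_sum fL); apply: eq_bigr => i _; rewrite [LHS](linearZ_LR fL).
Qed.

Section PermCount.
Variable T : finType.
Implicit Types (u v : T) (c : {perm T}).

Lemma card_perm_fix u : #|[pred c : {perm T} | c u == u]| = #|T|.-1`!.
Proof.
rewrite -(cardsC1 u) -card_perm; apply: eq_card => c; rewrite unfold_in /=.
apply/eqP/subsetP => [cu x|fix_u].
  by rewrite !inE; apply: contraNneq => ->; rewrite cu eqxx.
apply/eqP/negPn/negP => cu.
by have := fix_u u; rewrite !inE eqxx => /(_ cu).
Qed.

Lemma card_perm_to u v : #|[pred c : {perm T} | c u == v]| = #|T|.-1`!.
Proof.
rewrite -(card_perm_fix u) -(card_image (mulIg (tperm u v))).
apply: eq_card => c; rewrite inE; apply/imageP/eqP => [[d du ->]|cu].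
  by move: du; rewrite inE permM => /eqP ->; rewrite tpermR.
exists (c * tperm u v)%g; last by rewrite -mulgA tperm2 mulg1.
by rewrite inE permM cu tpermL.
Qed.

Lemma card_perm_all : #|{perm T}| = #|T|`!.
Proof.
rewrite -cardsT -card_perm; apply: eq_card => c.
by apply/esym/subsetP => x _; rewrite inE.
Qed.

Lemma sum_perm_by_preimage (V : nmodType) v (f : {perm T} -> V) :
  \sum_(c : {perm T}) f c = \sum_(u : T) \sum_(c : {perm T} | c u == v) f c.
Proof.
rewrite (exchange_big_dep xpredT) //=; apply: eq_bigr => c _.
rewrite (eq_bigl (pred1 ((c^-1)%g v))) ?big_pred1_eq // => u.
by rewrite /= -[LHS](inj_eq (@perm_inj _ c^-1)) permK.
Qed.
End PermCount.

Section PermMoment.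
Variables (F : numFieldType) (T : finType) (psi : T -> F).

Definition power_sum (p : nat) : F := \sum_x psi x ^+ p.

Variables (u o : T).
Hypothesis psi_o : psi o = 0.

Definition perm_moment (S : {set T}) (w : T -> nat) : F :=
  \sum_(c : {perm T} | c u == o) \prod_(r in S) psi (c r) ^+ w r.

Definition bump (w : T -> nat) t k r : nat := if r == t then (w r + k)%N else w r.

Lemma prod_bump (c : {perm T}) (S : {set T}) (w : T -> nat) t k : t \in S ->
  (\prod_(r in S) psi (c r) ^+ w r) * psi (c t) ^+ k
  = \prod_(r in S) psi (c r) ^+ bump w t k r.
Proof.
move=> tS; rewrite !(bigD1 t tS) /= /bump eqxx exprD mulrAC; congr (_ * _).
by apply: eq_bigr => r /andP[_ /negPf ->].
Qed.

(* Transposing r0 with any t outside S :\ r0 and different from u does not change the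
   moment; summing over these t yields the full power sum minus the terms in S :\ r0. *)
Lemma perm_moment_rec (S : {set T}) (w : T -> nat) r0 :
    u \notin S -> r0 \in S -> (0 < w r0)%N ->
  (#|T|%:R - #|S|%:R) * perm_moment S w =
  \sum_(c : {perm T} | c u == o) (\prod_(r in S :\ r0) psi (c r) ^+ w r) *
      (power_sum (w r0) - \sum_(t in S :\ r0) psi (c t) ^+ w r0).
Proof.
move=> uS r0S wr0; set S' := S :\ r0.
have uS' : u \notin S' by rewrite in_setD1 (negPf uS) andbF.
have u_r0 : u != r0 by apply: contraNneq uS => ->.
have moment_swap t : t \notin S' -> t != u -> perm_moment S w =
    \sum_(c : {perm T} | c u == o) psi (c t) ^+ w r0 * \prod_(r in S') psi (c r) ^+ w r.
  move=> tS' tu; rewrite /perm_moment (reindex_inj (mulgI (tperm r0 t))) /=.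
  apply: eq_big => [c|c _]; first by rewrite permM tpermD // eq_sym.
  rewrite (bigD1 r0) //= permM tpermL; congr (_ * _).
  apply: eq_big => [r|r /andP[rS rr0]]; first by rewrite in_setD1 andbC.
  rewrite permM tpermD // eq_sym //.
  by apply: contraNneq tS' => <-; rewrite in_setD1 rr0.
have split_outside (g : T -> F) :
    \sum_(t | (t \notin S') && (t != u)) g t = \sum_t g t - \sum_(t in S') g t - g u.
  rewrite [\sum_t g t](bigID (mem S')) [\sum_(t | t \notin S') g t](bigD1 u) //=.
  by rewrite addrC addrK addrC addrK.
have -> : #|T|%:R - #|S|%:R = \sum_(t | (t \notin S') && (t != u)) (1 : F).
  rewrite split_outside !sumr_const.
  by rewrite (cardsD1 r0 S) r0S add1n -addn1 !natrD opprD addrA.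
rewrite mulr_suml (eq_bigr _ (fun t tu => mul1r _)).
rewrite (eq_bigr _ (fun t (tu : (t \notin S') && (t != u)) =>
  moment_swap t (andP tu).1 (andP tu).2)).
rewrite exchange_big /=; apply: eq_bigr => c /eqP cu.
rewrite -mulr_suml mulrC split_outside cu psi_o expr0n /= eqn0Ngt wr0 subr0.
by congr (_ * (_ - _)); rewrite /power_sum [RHS](reindex_inj (@perm_inj _ c)).
Qed.

Lemma perm_moment_set1 r0 (w : T -> nat) : u != r0 -> (0 < w r0)%N ->
  perm_moment [set r0] w = (#|T| - 2)`!%:R * power_sum (w r0).
Proof.
move=> u_r0 w_r0; have := perm_moment_rec (w := w) _ (set11 r0) w_r0.
rewrite in_set1 u_r0 setDv cards1 => /(_ isT).
under eq_bigr do rewrite !big_set0 mul1r subr0.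
rewrite sumr_const card_perm_to.
have [N ->] : exists N, #|T| = N.+2.
  exists (#|T| - 2)%N; suff: (2 <= #|T|)%N by lia.
  by have := max_card [set u; r0]; rewrite cards2 u_r0.
rewrite (_ : N.+2 - 2 = N)%N /= ?subn0; last by lia.
move=> eq_moment.
apply: (mulfI (_ : N.+1%:R != 0)); first by rewrite pnatr_eq0.
by rewrite mulrA -natrM -factS [RHS]mulr_natl -eq_moment [N.+2%:R]mulrSr addrK.
Qed.

Lemma perm_moment_merge (S : {set T}) (w : T -> nat) r0 :
    u \notin S -> r0 \in S -> (0 < w r0)%N -> power_sum (w r0) = 0 ->
  (#|T|%:R - #|S|%:R) * perm_moment S w
  = - \sum_(t in S :\ r0) perm_moment (S :\ r0) (bump w t (w r0)).
Proof.
move=> uS r0S w_r0 power_sum0; rewrite (perm_moment_rec uS r0S w_r0) power_sum0.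
under eq_bigr do rewrite sub0r mulrN mulr_sumr.
rewrite sumrN exchange_big /=; congr (- _); apply: eq_bigr => t tS'.
by apply: eq_bigr => c _; apply: prod_bump.
Qed.

Lemma perm_momentE m :
    (forall p, (0 < p < m)%N -> power_sum p = 0) ->
  forall b (S : {set T}) (w : T -> nat), #|S| = b.+1 -> u \notin S ->
  {in S, forall r, 0 < w r}%N -> (\sum_(r in S) w r)%N = m ->
  perm_moment S w = (-1) ^+ b * (b`! * (#|T| - b.+2)`!)%:R * power_sum m.
Proof.
move=> power_sum_lt; elim=> [|b IH] S w cardS uS w_gt0 sum_w.
  have [r0 S_r0] := cards1P (introT eqP cardS).
  move: uS w_gt0 sum_w; rewrite S_r0 in_set1 big_set1 => u_r0 w_gt0 <-.
  by rewrite perm_moment_set1 ?w_gt0 ?set11 // expr0 mul1r fact0 mul1n.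
have [r0 r0S] : exists r0, r0 \in S by apply/set0Pn; rewrite -card_gt0 cardS.
set S' := S :\ r0.
have cardS' : #|S'| = b.+1 by move: cardS; rewrite (cardsD1 r0) r0S => -[].
have uS' : u \notin S' by rewrite in_setD1 (negPf uS) andbF.
have w_gt0' : {in S', forall r, 0 < w r}%N.
  by move=> r; rewrite in_setD1 => /andP[_]; apply: w_gt0.
have sum_w' : (w r0 + \sum_(r in S') w r)%N = m.
  rewrite -sum_w [in RHS](bigD1 r0) //=; congr (_ + _)%N.
  by apply: eq_bigl => r; rewrite in_setD1 andbC.
have power_sum_r0 : power_sum (w r0) = 0.
  apply: power_sum_lt; rewrite w_gt0 //= -sum_w' -{1}[w r0]addn0 ltn_add2l.
  have [r1 r1S'] : exists r1, r1 \in S' by apply/set0Pn; rewrite -card_gt0 cardS'.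
  by rewrite (bigD1 r1) //= ltn_addr // w_gt0'.
have merged t : t \in S' -> perm_moment S' (bump w t (w r0))
    = (-1) ^+ b * (b`! * (#|T| - b.+2)`!)%:R * power_sum m.
  move=> tS'; apply: IH => // [r rS'|].
    by rewrite /bump; case: ifP; rewrite ?addn_gt0 w_gt0'.
  rewrite -sum_w' addnC !(bigD1 t tS') /= /bump eqxx -addnA [(w r0 + _)%N]addnC addnA.
  by congr (_ + _ + _)%N; apply: eq_bigr => r /andP[_ /negPf ->].
have := perm_moment_merge uS r0S (w_gt0 r0 r0S) power_sum_r0.
rewrite (eq_bigr _ merged) sumr_const cardS'.
have T_big : (b.+3 <= #|T|)%N by have := max_card (u |: S); rewrite cardsU1 uS cardS.
have [N eT] : exists N, #|T| = (N + b.+3)%N by exists (#|T| - b.+3)%N; rewrite subnK.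
rewrite cardS eT addnK -addSnnS addnK natrD addrK => eq_moment.
apply: (mulfI (_ : N.+1%:R != 0)); first by rewrite pnatr_eq0.
by rewrite eq_moment -[X in - X]mulr_natr !factS !natrM exprS; ring.
Qed.
End PermMoment.

Lemma sum_ord_window (V : nmodType) (N m : nat) (G : nat -> V) : (m < N)%N ->
  \sum_(l < N) (if (0 < l <= m)%N then G l else 0) = \sum_(1 <= l < m.+1) G l.
Proof.
move=> m_lt_N.
rewrite -(big_mkord xpredT (fun l => if (0 < l <= m)%N then G l else 0)).
have N_gt0 : (0 < N)%N by apply: leq_ltn_trans m_lt_N.
rewrite -big_mkcond big_ltn_cond //= (big_nat_widen _ _ _ _ _ m_lt_N).
by apply: congr_big_nat => // l /andP[l_gt0 _]; rewrite l_gt0 ltnS.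
Qed.

Lemma sum_expr_root_unity (R : idomainType) (z : R) m : z ^+ m = 1 -> z != 1 ->
  \sum_(1 <= l < m.+1) z ^+ l = 0.
Proof.
move=> zm z_neq1; rewrite big_add1 /= big_mkord.
under eq_bigr do rewrite exprS; rewrite -mulr_sumr.
have : (z - 1) * \sum_(i < m) z ^+ i = 0 by rewrite -subrX1 zm subrr.
by move/eqP; rewrite mulf_eq0 subr_eq0 (negPf z_neq1) => /eqP ->; rewrite mulr0.
Qed.

Lemma sum_eq_cst_ffun (R : pzSemiRingType) (J : finType) m (k : {ffun 'I_m.+1 -> J}) :
  \sum_(v : J) (k == [ffun=> v])%:R = (#|k @: setT| == 1%N)%:R :> R.
Proof.
have cst_inj : injective (fun v : J => [ffun=> v] : {ffun 'I_m.+1 -> J}).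
  by move=> v1 v2 /ffunP /(_ ord0); rewrite !ffunE.
have im_cst v : ([ffun=> v] : {ffun 'I_m.+1 -> J}) @: setT = [set v].
  apply/setP => x; rewrite inE; apply/imsetP/eqP => [[j _ ->]|->]; first by rewrite ffunE.
  by exists ord0; rewrite ?ffunE.
case: cards1P => [[v k_im]|k_not_cst].
  have -> : k = [ffun=> v].
    by apply/ffunP => j; rewrite ffunE; apply/set1P; rewrite -k_im imset_f.
  under eq_bigr do rewrite (inj_eq cst_inj).
  by rewrite (bigD1 v) //= eqxx big1 ?addr0 // => w; rewrite eq_sym => /negPf ->.
apply: big1 => v _; case: eqP => // k_v.
by case: k_not_cst; exists v; rewrite k_v im_cst.
Qed.

Section IndexCoefficients.
Variables (F : numFieldType) (n : nat) (omega : {set 'I_n.+1} -> F).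
Implicit Types (S : {set 'I_n.+1}) (k : {ffun 'I_n.+1 -> 'I_n.+2}).
Implicit Types (c : {perm 'I_n.+2}) (u r : 'I_n.+2).

Definition root_coef S (l : 'I_n.+2) : F :=
  if (0 < l <= #|S|)%N then omega S ^+ l else 0.

Definition copy_coef S (j : 'I_n.+1) (l : 'I_n.+2) : F :=
  if j \in S then root_coef S l else (l == ord0)%:R.

Definition index_coef S k : F := \prod_j copy_coef S j (k j).

Definition index_weight k : F :=
  \sum_(S : {set 'I_n.+1} | ord0 \in S) #|S|%:R^-1 * index_coef S k.

Definition relabel c k : {ffun 'I_n.+1 -> 'I_n.+2} := [ffun j => c (k j)].

Definition supp_off k u : {set 'I_n.+1} := [set j | k j != u].

Definition range_off k u : {set 'I_n.+2} := k @: setT :\ u.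

Definition mult k r : nat := #|[set j | k j == r]|.

Lemma index_coef_relabel_eq0 k c u S :
  c u = ord0 -> S != supp_off k u -> index_coef S (relabel c k) = 0.
Proof.
move=> cu S_supp.
have [j S_j] : exists j, (j \in S) != (j \in supp_off k u).
  apply/existsP; apply: contraNT S_supp => /existsPn S_eq.
  by apply/eqP/setP => j; apply/eqP/negPn.
rewrite /index_coef (bigD1 j) //= ffunE /copy_coef.
move: S_j; rewrite inE; case: (j \in S) => [/negPn/eqP ->|/negPn kj_u].
  by rewrite cu /root_coef mul0r.
suff /negPf -> : c (k j) != ord0 by rewrite mul0r.
by apply: contra kj_u => /eqP ckj; apply/eqP/(@perm_inj _ c); rewrite ckj cu.
Qed.

Lemma index_coef_relabel k c u : c u = ord0 ->
  index_coef (supp_off k u) (relabel c k)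
  = \prod_(r in range_off k u) root_coef (supp_off k u) (c r) ^+ mult k r.
Proof.
move=> cu; rewrite /index_coef (bigID (mem (supp_off k u))) /=.
rewrite [X in _ * X]big1 ?mulr1; last first.
  move=> j j_supp; rewrite /copy_coef ffunE (negPf j_supp).
  by move: j_supp; rewrite inE negbK => /eqP ->; rewrite cu.
rewrite (partition_big (fun j => k j) (mem (range_off k u))) /=; last first.
  by move=> j; rewrite !inE => ->; rewrite imset_f.
apply: eq_bigr => r; rewrite in_setD1 => /andP[r_u _].
rewrite (eq_bigr (fun _ => root_coef (supp_off k u) (c r))); last first.
  by move=> j /andP[j_supp /eqP kj]; rewrite /copy_coef j_supp ffunE kj.
rewrite -prodr_const; apply: eq_bigl => j; rewrite !inE.
by case: (k j =P r) => [->|]; rewrite ?r_u ?andbF ?andbT.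
Qed.

Lemma index_weight_relabel_fiber k u :
  \sum_(c : {perm 'I_n.+2} | c u == ord0) index_weight (relabel c k)
  = if u == k ord0 then 0
    else #|supp_off k u|%:R^-1 *
         perm_moment (root_coef (supp_off k u)) u ord0 (range_off k u) (mult k).
Proof.
case: eqP => [u_k0|/eqP u_k0].
  apply: big1 => c /eqP cu; apply: big1 => S S0.
  rewrite (index_coef_relabel_eq0 cu) ?mulr0 //.
  by apply: contraTneq S0 => ->; rewrite inE u_k0 eqxx.
rewrite /perm_moment mulr_sumr; apply: eq_bigr => c /eqP cu.
have supp0 : ord0 \in supp_off k u by rewrite inE eq_sym.
rewrite /index_weight (bigD1 (supp_off k u)) //= (index_coef_relabel _ cu).
rewrite [X in _ + X]big1 ?addr0 // => S /andP[_ S_supp].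
by rewrite (index_coef_relabel_eq0 cu) ?mulr0.
Qed.

Lemma sum_mult_range_off k u : (\sum_(r in range_off k u) mult k r)%N = #|supp_off k u|.
Proof.
rewrite -sum1_card (partition_big (fun j => k j) (mem (range_off k u))) /=; last first.
  by move=> j; rewrite !inE => ->; rewrite imset_f.
apply: eq_bigr => r; rewrite in_setD1 => /andP[r_u _].
rewrite /mult -sum1_card; apply: eq_bigl => j; rewrite !inE.
by case: (k j =P r) => [->|]; rewrite ?r_u ?andbF ?andbT.
Qed.

Lemma mult_gt0 k u : {in range_off k u, forall r, 0 < mult k r}%N.
Proof.
move=> r; rewrite in_setD1 => /andP[_ /imsetP[j _ ->]].
by apply/card_gt0P; exists j; rewrite inE.
Qed.

Lemma power_sum_root_coef S p : (0 < p)%N ->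
  power_sum (root_coef S) p = \sum_(1 <= l < #|S|.+1) (omega S ^+ p) ^+ l.
Proof.
move=> p_gt0; rewrite /power_sum -(@sum_ord_window _ n.+2); last first.
  by rewrite ltnS (leq_trans (max_card _)) ?card_ord.
apply: eq_bigr => l _; rewrite /root_coef; case: ifP => _; first by rewrite exprAC.
by rewrite expr0n eqn0Ngt p_gt0.
Qed.

Lemma power_sum_root_coef_lt S p : #|S|.-primitive_root (omega S) ->
  (0 < p < #|S|)%N -> power_sum (root_coef S) p = 0.
Proof.
move=> omega_prim /andP[p_gt0 p_lt]; rewrite power_sum_root_coef //.
apply: sum_expr_root_unity; first by rewrite exprAC (prim_expr_order omega_prim) expr1n.
by rewrite -(prim_order_dvd omega_prim) gtnNdvd.
Qed.

Lemma power_sum_root_coef_card S : #|S|.-primitive_root (omega S) ->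
  power_sum (root_coef S) #|S| = #|S|%:R.
Proof.
move=> omega_prim; rewrite power_sum_root_coef ?(prim_order_gt0 omega_prim) //.
rewrite prim_expr_order // big_add1 /=.
by under eq_bigr do rewrite expr1n; rewrite sumr_const_nat subn0.
Qed.

Definition moment_coef (b : nat) : F := (-1) ^+ b * (b`! * (n - b)`!)%:R.

Lemma moment_coef_rec b : (b < n)%N ->
  b.+1%:R * moment_coef b + (n - b)%:R * moment_coef b.+1 = 0.
Proof.
move=> b_lt_n; rewrite /moment_coef.
have -> : (n - b = (n - b.+1).+1)%N by lia.
by rewrite !factS !natrM exprS; ring.
Qed.

Hypothesis omega_prim : forall S, ord0 \in S -> #|S|.-primitive_root (omega S).

Lemma index_weight_relabel_fiberE k u :
  \sum_(c : {perm 'I_n.+2} | c u == ord0) index_weight (relabel c k)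
  = if u == k ord0 then 0 else moment_coef #|range_off k u|.-1.
Proof.
rewrite index_weight_relabel_fiber; case: eqP => // /eqP u_k0.
have supp0 : ord0 \in supp_off k u by rewrite inE eq_sym.
have k0_range : k ord0 \in range_off k u by rewrite in_setD1 eq_sym u_k0 imset_f.
have card_range : #|range_off k u| = #|range_off k u|.-1.+1.
  by rewrite prednK //; apply/card_gt0P; exists (k ord0).
have u_range : u \notin range_off k u by rewrite in_setD1 eqxx.
rewrite (perm_momentE _ _ card_range u_range (@mult_gt0 k u) (sum_mult_range_off k u)).
- rewrite power_sum_root_coef_card ?omega_prim // card_ord !subSS mulrC mulfK //.
  by rewrite pnatr_eq0 -lt0n; apply/card_gt0P; exists ord0.
- by rewrite /root_coef.
- by move=> p; apply: power_sum_root_coef_lt; apply: omega_prim.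
Qed.

Lemma index_weight_relabel_sum k :
  \sum_(c : {perm 'I_n.+2}) index_weight (relabel c k)
  = (n.+1)`!%:R * (#|k @: setT| == 1%N)%:R.
Proof.
rewrite (sum_perm_by_preimage ord0).
under eq_bigr do rewrite index_weight_relabel_fiberE.
set K := k @: setT; have K_k0 : k ord0 \in K by rewrite imset_f.
rewrite (bigID (mem K)) /= (bigD1 (k ord0)) //= eqxx add0r.
rewrite (eq_bigr (fun=> moment_coef #|K|.-2)); last first.
  by move=> u /andP[u_K /negPf ->]; rewrite /range_off (cardsD1 u K) u_K.
rewrite [X in _ + X](eq_bigr (fun=> moment_coef #|K|.-1)); last first.
  move=> u u_K; rewrite /range_off (cardsD1 u K) (negPf u_K) ifN //.
  by apply: contraNneq u_K => ->.
rewrite (eq_bigl (mem (K :\ k ord0))); last by move=> u; rewrite !inE andbC.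
rewrite [X in _ + X](eq_bigl (mem (~: K))); last by move=> u; rewrite !inE.
rewrite !sumr_const.
have card_K1 : #|K :\ k ord0| = #|K|.-1 by rewrite (cardsD1 (k ord0) K) K_k0.
have card_KC : #|~: K| = (n.+2 - #|K|)%N.
  by have := cardsC K; rewrite card_ord; lia.
have K_le : (#|K| <= n.+1)%N.
  by rewrite (leq_trans (leq_imset_card _ _)) ?cardsT ?card_ord.
rewrite card_K1 card_KC; move: K_le.
case card_K : #|K| => [|[|b]] K_le /=.
- by move/eqP: card_K; rewrite cards_eq0 => /eqP K0; rewrite K0 inE in K_k0.
- rewrite /moment_coef mulr0n add0r expr0 mul1r fact0 mul1n subn0 subn1 /=.
  by rewrite mulr1 factS natrM mulrC mulr_natr.
- rewrite mulr0 !subSS -[X in X + _]mulr_natl -[X in _ + X]mulr_natl.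
  exact: moment_coef_rec.
Qed.

Lemma relabel_inj (c : {perm 'I_n.+2}) : injective (relabel c).
Proof.
move=> k1 k2 /ffunP k12; apply/ffunP => j; apply: (@perm_inj _ c).
by have := k12 j; rewrite !ffunE.
Qed.

Lemma index_weight_average (G : {ffun 'I_n.+1 -> 'I_n.+2} -> F) :
  (forall c k, G (relabel c k) = G k) ->
  \sum_k index_weight k * G k = G [ffun=> ord0].
Proof.
move=> G_inv.
have G_const v : G [ffun=> v] = G [ffun=> ord0].
  by rewrite -(G_inv (tperm v ord0)); congr G; apply/ffunP => j; rewrite !ffunE tpermL.
apply: (@mulfI _ (n.+2)`!%:R); first by rewrite pnatr_eq0 -lt0n fact_gt0.
have sum_P : \sum_(c : {perm 'I_n.+2}) 1 = (n.+2)`!%:R :> F.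
  by rewrite sumr_const card_perm_all card_ord.
rewrite -sum_P !mulr_suml.
rewrite (eq_bigr (fun c => \sum_k index_weight (relabel c k) * G k)); last first.
  move=> c _; rewrite mul1r (reindex_inj (@relabel_inj c)) /=.
  by apply: eq_bigr => k _; rewrite G_inv.
rewrite exchange_big /=.
rewrite (eq_bigr (fun k => (n.+1)`!%:R * \sum_v ((k == [ffun=> v])%:R * G k))); last first.
  move=> k _; rewrite -[LHS]mulr_suml index_weight_relabel_sum -sum_eq_cst_ffun.
  by rewrite -mulrA mulr_suml.
have sum_at_cst v : \sum_k (k == [ffun=> v])%:R * G k = G [ffun=> ord0].
  rewrite (bigD1 [ffun=> v]) //= eqxx mul1r big1 ?addr0 ?G_const // => k'.
  by move=> /negPf ->; rewrite mul0r.
rewrite -mulr_sumr exchange_big /= (eq_bigr _ (fun v _ => sum_at_cst v)) !sumr_const.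
rewrite mul1r card_perm_all !card_ord [(n.+2)`!]factS mulnC mulrnA.
by rewrite mulrnAr mulr_natl.
Qed.
End IndexCoefficients.

Section ExchangeabilitySystem.
Variables (R : realType) (A U : algType R[i]).
Variables (phi : A -> R[i]^o) (phit : U -> R[i]^o) (iota : nat -> {lrmorphism A -> U}).
Hypothesis exch : exchangeability_system phi phit iota.
Variables (n : nat) (X : 'I_n.+1 -> A).

Definition mixed_moment (k : {ffun 'I_n.+1 -> 'I_n.+2}) : R[i] :=
  phit (\prod_j iota (k j) (X j)).

Lemma mixed_moment_relabel c k : mixed_moment (relabel c k) = mixed_moment k.
Proof.
have [_ _ _ exch_perm] := exch.
pose s i := if (i < n.+2)%N then val (c (inord i)) else i.
pose s' i := if (i < n.+2)%N then val ((c^-1)%g (inord i)) else i.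
have s_bij : bijective s.
  by exists s' => i; rewrite /s /s'; case: (ltnP i n.+2) => i_lt /=;
    rewrite ?ltn_ord ?inord_val ?permK ?permKV ?inordK // ltnNge i_lt.
rewrite /mixed_moment (exch_perm _ X (fun j => k j : nat) _ s_bij).
by congr phit; apply: eq_bigr => j _; rewrite /s ltn_ord inord_val ffunE.
Qed.

Lemma mixed_moment_ord0 : mixed_moment [ffun=> ord0] = phi (\prod_j X j).
Proof.
have [_ _ iota_phi _] := exch.
by rewrite -(iota_phi 0%N) rmorph_prod; congr phit; apply: eq_bigr => j _; rewrite ffunE.
Qed.
End ExchangeabilitySystem.

Section OmegaCopyExpansion.
Variables (R : realType) (A U : algType R[i]) (iota : nat -> {lrmorphism A -> U}).
Variables (n : nat) (omega : {set 'I_n.+1} -> R[i]) (S : {set 'I_n.+1}).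

Lemma omega_copyE x j :
  omega_copy iota S (omega S) x j = \sum_(l : 'I_n.+2) copy_coef omega S j l *: iota l x.
Proof.
rewrite /omega_copy /copy_coef; case: ifP => j_S.
  rewrite -(@sum_ord_window _ n.+2 #|S| (fun l => omega S ^+ l *: iota l x)).
    by apply: eq_bigr => l _; rewrite /root_coef; case: ifP; rewrite ?scale0r.
  by rewrite ltnS (leq_trans (max_card _)) ?card_ord.
rewrite (bigD1 ord0) //= scale1r big1 ?addr0 // => l /negPf l_0.
by rewrite l_0 scale0r.
Qed.

Lemma prod_omega_copyE (X : 'I_n.+1 -> A) :
  \prod_j omega_copy iota S (omega S) (X j) j
  = \sum_(k : {ffun 'I_n.+1 -> 'I_n.+2}) index_coef omega S k *: \prod_j iota (k j) (X j).
Proof.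
under eq_bigr do rewrite omega_copyE.
by rewrite bigA_distr_bigA; apply: eq_bigr => k _; rewrite scaler_prod.
Qed.
End OmegaCopyExpansion.

Theorem proposition3p9 (R : realType) (A U : algType R[i])
    (phi : A -> R[i]^o) (phit : U -> R[i]^o) (iota : nat -> {lrmorphism A -> U})
    (Hphi : unital_functional phi)
    (Hexch : exchangeability_system phi phit iota)
    (n : nat) (X : 'I_n.+1 -> A)
    (omega : {set 'I_n.+1} -> R[i])
    (Homega : forall S : {set 'I_n.+1}, ord0 \in S -> #|S|.-primitive_root (omega S)) :
  phi (\prod_(j < n.+1) X j)
  = \sum_(S : {set 'I_n.+1} | ord0 \in S)
      (#|S|%:R)^-1 * phit (\prod_(j < n.+1) omega_copy iota S (omega S) (X j) j).
Proof.
have [[phit_lin _] _ _ _] := Hexch.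
rewrite -(mixed_moment_ord0 Hexch X).
rewrite -(index_weight_average Homega (mixed_moment_relabel Hexch X)).
under eq_bigr do rewrite mulr_suml; rewrite exchange_big /=.
apply: eq_bigr => S _; rewrite prod_omega_copyE linear_sumZ // mulr_sumr.
by apply: eq_bigr => k _; rewrite mulrA.
Qed.
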